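(* Let $G$ be a Lindelöf Hausdorff topological group which is $(\omega,\mathfrak c)$-moderate. Then $w(G)\leq|C(G)|\leq\psi(G)^\omega$. Consequently $G$ is $(\tau,\tau^\omega)$-moderate for every cardinal $\tau\geq\omega$.
   Context: $C(G)$ is the set of continuous real-valued functions on $G$; $w$ weight, $\psi$ pseudocharacter, $\mathfrak c=2^\omega$. For infinite cardinals $\kappa\leq\lambda$, a topological group $G$ is $(\kappa,\lambda)$-moderate if every Hausdorff topological group $H$ which is a continuous homomorphic image of $G$ and satisfies $\psi(H)\leq\kappa$ has $w(H)\leq\lambda$. *)

(* Hausdorff topological groups built from scratch; cardinals
   are handled via types and injections/surjections. *)
From Stdlib Require Import Reals.
From Stdlib Require Import Rtopology.

Record topgroup := TopGroup {
  carrier :> Type;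
  mul : carrier -> carrier -> carrier;
  inv : carrier -> carrier;
  one : carrier;
  opn : (carrier -> Prop) -> Prop;
  mulA : forall x y z, mul x (mul y z) = mul (mul x y) z;
  mul1g : forall x, mul one x = x;
  mulVg : forall x, mul (inv x) x = one;
  opn_full : opn (fun _ => True);
  opn_inter : forall U V, opn U -> opn V -> opn (fun x => U x /\ V x);
  opn_union : forall F : (carrier -> Prop) -> Prop,
      (forall U, F U -> opn U) -> opn (fun x => exists U, F U /\ U x);
  mul_cont : forall W x y, opn W -> W (mul x y) ->
      exists U V, opn U /\ opn V /\ U x /\ V y /\
        (forall a b, U a -> V b -> W (mul a b));
  inv_cont : forall W, opn W -> opn (fun x => W (inv x))
}.

Definition hausdorff (G : topgroup) : Prop :=
  forall x y : G, x <> y ->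
    exists U V, opn G U /\ opn G V /\ U x /\ V y /\ (forall z, ~ (U z /\ V z)).

Definition lindelof (G : topgroup) : Prop :=
  forall (I : Type) (U : I -> G -> Prop),
    (forall i, opn G (U i)) -> (forall x, exists i, U i x) ->
    exists s : nat -> I, forall x, exists n, U (s n) x.

(* B : I -> open sets is a base of G; "w(G) <= |I|" for nonempty I. *)
Definition is_base (G : topgroup) (I : Type) (B : I -> G -> Prop) : Prop :=
  (forall i, opn G (B i)) /\
  (forall U x, opn G U -> U x -> exists i, B i x /\ (forall y, B i y -> U y)).

Definition weight_le (G : topgroup) (I : Type) : Prop :=
  exists B : I -> G -> Prop, is_base G I B.

Definition pseudobase_at (G : topgroup) (K : Type) (x : G) (P : K -> G -> Prop) : Prop :=
  (forall k, opn G (P k)) /\ (forall y, (forall k, P k y) <-> y = x).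

Definition infinite_type (K : Type) : Prop :=
  exists f : nat -> K, forall m n, f m = f n -> m = n.

(* psi(G) <= |K| (psi(G) includes the +omega convention, so K is infinite). *)
Definition pseudochar_le (G : topgroup) (K : Type) : Prop :=
  infinite_type K /\ forall x : G, exists P : K -> G -> Prop, pseudobase_at G K x P.

Definition continuous_map (G H : topgroup) (f : G -> H) : Prop :=
  forall V, opn H V -> opn G (fun x => V (f x)).

Definition is_hom (G H : topgroup) (f : G -> H) : Prop :=
  forall x y, f (mul G x y) = mul H (f x) (f y).

Definition cont_hom_image (G H : topgroup) : Prop :=
  exists f : G -> H, continuous_map G H f /\ is_hom G H f /\
    (forall y : H, exists x, f x = y).

Definition cont_real (G : topgroup) (f : G -> R) : Prop :=
  forall V, open_set V -> opn G (fun x => V (f x)).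

Definition moderate (Kp Lm : Type) (G : topgroup) : Prop :=
  forall H : topgroup, hausdorff H -> cont_hom_image G H ->
    pseudochar_le H Kp -> weight_le H Lm.

(* (omega, c)-moderate: kappa = |nat|, lambda = c = |nat -> bool|. *)
Definition omega_c_moderate (G : topgroup) : Prop :=
  moderate nat (nat -> bool) G.

From Stdlib Require Import Reals Lra Lia Classical ClassicalEpsilon FunctionalExtensionality
  PropExtensionality ProofIrrelevance FinFun List Rtopology Cantor.
Import ListNotations.

(* Base: the cozero sets of the Birkhoff-Kakutani prenorms built from cube-root
   sequences of neighbourhoods of the identity, so w(G) <= |C(G)|.
   Psi bound: fix a pseudobase {P k} at the identity of size psi(G). Using omega-narrowness,
   each P k contains a closed normal G_delta subgroup N_k, and the N_k meet in {e}; so by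
   Lindelofness every neighbourhood W of e contains the intersection N of countably many
   N_k. G/N is Hausdorff of countable pseudocharacter, hence has weight <= c by
   moderateness, and pulling back these bases gives w(G) <= psi(G)^omega * c.
   A continuous f is then determined by countable Lindelof subcovers of the preimages of
   dyadic intervals, which gives |C(G)| <= psi(G)^omega. The last claim applies this to
   continuous homomorphic images of G, which inherit both hypotheses. *)

Section GroupFacts.
Variable G : topgroup.
Local Notation "x ** y" := (mul G x y) (at level 40, left associativity).
Local Notation e := (one G).
Local Notation iv := (inv G).

Lemma mulgV x : x ** iv x = e.
Proof.
  assert (H : iv (iv x) ** iv x = e) by apply mulVg.
  rewrite <- (mul1g G (x ** iv x)), <- H at 1.
  rewrite <- mulA, (mulA G (iv x) x (iv x)), mulVg, mul1g. exact H.
Qed.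

Lemma mulg1 x : x ** e = x.
Proof. rewrite <- (mulVg G x), mulA, mulgV, mul1g. reflexivity. Qed.

Lemma invgK x : iv (iv x) = x.
Proof. rewrite <- (mulg1 (iv (iv x))), <- (mulVg G x), mulA, mulVg, mul1g. reflexivity. Qed.

Lemma invg1 : iv e = e.
Proof. rewrite <- (mulg1 (iv e)), mulVg. reflexivity. Qed.

Lemma mulKg x y : iv x ** (x ** y) = y.
Proof. rewrite mulA, mulVg, mul1g. reflexivity. Qed.

Lemma mulKVg x y : x ** (iv x ** y) = y.
Proof. rewrite mulA, mulgV, mul1g. reflexivity. Qed.

Lemma mulgK x y : y ** x ** iv x = y.
Proof. rewrite <- mulA, mulgV, mulg1. reflexivity. Qed.

Lemma mulgI x y z : x ** y = x ** z -> y = z.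
Proof. intro H. rewrite <- (mulKg x y), H, mulKg. reflexivity. Qed.

Lemma invgM x y : iv (x ** y) = iv y ** iv x.
Proof.
  apply (mulgI (x ** y)). rewrite mulgV.
  rewrite <- mulA, (mulA G y (iv y)), mulgV, mul1g, mulgV. reflexivity.
Qed.

Lemma opn_local (S : G -> Prop) :
  (forall z, S z -> exists U, opn G U /\ U z /\ (forall y, U y -> S y)) -> opn G S.
Proof.
  intro H.
  replace S with (fun x => exists U, (opn G U /\ (forall y, U y -> S y)) /\ U x).
  - apply opn_union. intros U [HU _]. exact HU.
  - apply functional_extensionality; intro x; apply propositional_extensionality; split.
    + intros [U [[_ HUS] HUx]]. auto.
    + intro Hx. destruct (H x Hx) as [U [HU [HUx HUS]]]. exists U. auto.
Qed.

Lemma opn_ext (S T : G -> Prop) : (forall x, S x <-> T x) -> opn G S -> opn G T.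
Proof.
  intros H HS. replace T with S; auto.
  apply functional_extensionality; intro x; apply propositional_extensionality; auto.
Qed.

Lemma opn_mulr (W : G -> Prop) a : opn G W -> opn G (fun z => W (z ** a)).
Proof.
  intro HW. apply opn_local. intros z Hz.
  destruct (mul_cont G W z a HW Hz) as [U [V [HU [_ [HUz [HVa HUV]]]]]].
  exists U. auto.
Qed.

Lemma opn_mull (W : G -> Prop) a : opn G W -> opn G (fun z => W (a ** z)).
Proof.
  intro HW. apply opn_local. intros z Hz.
  destruct (mul_cont G W a z HW Hz) as [U [V [_ [HV [HUa [HVz HUV]]]]]].
  exists V. auto.
Qed.

Definition cube_root_nbhd (V W : G -> Prop) : Prop :=
  opn G W /\ W e /\ (forall a, W a -> W (iv a)) /\
  (forall a b c, W a -> W b -> W c -> V (a ** (b ** c))).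

Lemma cube_root_nbhd_exists (V : G -> Prop) : opn G V -> V e -> exists W, cube_root_nbhd V W.
Proof.
  intros HV He.
  assert (H1 : V (e ** e)) by (rewrite mul1g; exact He).
  destruct (mul_cont G V e e HV H1) as [A [B [HA [HB [HAe [HBe HAB]]]]]].
  assert (H2 : B (e ** e)) by (rewrite mul1g; exact HBe).
  destruct (mul_cont G B e e HB H2) as [C [D [HC [HD [HCe [HDe HCD]]]]]].
  pose (W0 := fun x => A x /\ C x /\ D x).
  assert (HW0 : opn G W0) by (apply opn_inter; auto; apply opn_inter; auto).
  exists (fun x => W0 x /\ W0 (iv x)). split; [|split; [|split]].
  - apply opn_inter; auto. apply (inv_cont G W0 HW0).
  - rewrite invg1. unfold W0. tauto.
  - intros a [Ha Hia]. rewrite invgK. auto.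
  - intros a b c [[Ha _] _] [[_ [Hb _]] _] [[_ [_ Hc]] _]. auto.
Qed.

End GroupFacts.

(* A countable system of identity neighbourhoods whose [kernel] below is a closed normal
   G_delta subgroup. *)
Record normal_system (G : topgroup) (J : Type) (F : J -> G -> Prop) : Prop := {
  sys_open : forall j, opn G (F j);
  sys_one : forall j, F j (one G);
  sys_cube : forall j, exists j', cube_root_nbhd G (F j) (F j');
  sys_conj : forall j x, exists j',
    forall a, F j' a -> F j (mul G (mul G x a) (inv G x));
  sys_countable : exists s : nat -> J, forall j, exists n, s n = j
}.

Section Quotient.
Variable G : topgroup.
Local Notation "x ** y" := (mul G x y) (at level 40, left associativity).
Local Notation e := (one G).
Local Notation iv := (inv G).
Variables (J : Type) (F : J -> G -> Prop).
Hypothesis sysF : normal_system G J F.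

Definition kernel (z : G) : Prop := forall j, F j z.

Lemma sys_mul j : exists j', forall a b, F j' a -> F j' b -> F j (a ** b).
Proof.
  destruct (sys_cube _ _ _ sysF j) as [j' [_ [_ [_ H]]]]. exists j'. intros a b Ha Hb.
  rewrite <- (mulg1 G b). apply H; auto. apply (sys_one _ _ _ sysF).
Qed.

Lemma sys_inv j : exists j', forall a, F j' a -> F j (iv a).
Proof.
  destruct (sys_cube _ _ _ sysF j) as [j' [_ [He [Hs H]]]]. exists j'. intros a Ha.
  rewrite <- (mulg1 G (iv a)), <- (mul1g G e). auto.
Qed.

Lemma kernel1 : kernel e.
Proof. intro j. apply (sys_one _ _ _ sysF). Qed.

Lemma kernelM a b : kernel a -> kernel b -> kernel (a ** b).
Proof. intros Ha Hb j. destruct (sys_mul j) as [j' H]. auto. Qed.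

Lemma kernelV a : kernel a -> kernel (iv a).
Proof. intros Ha j. destruct (sys_inv j) as [j' H]. auto. Qed.

Lemma kernelJ x a : kernel a -> kernel (x ** a ** iv x).
Proof. intros Ha j. destruct (sys_conj _ _ _ sysF j x) as [j' H]. auto. Qed.

Lemma opn_not_kernel : opn G (fun z => ~ kernel z).
Proof.
  apply opn_local. intros z Hz.
  apply not_all_ex_not in Hz. destruct Hz as [j Hj].
  destruct (sys_cube _ _ _ sysF j) as [j' [Ho [He [Hs Hc]]]].
  exists (fun y => F j' (iv z ** y)). split; [|split].
  - apply opn_mull. exact Ho.
  - rewrite mulVg. exact He.
  - intros y Hy Hk. apply Hj.
    replace z with (y ** (iv (iv z ** y) ** e)).
    + apply Hc; auto.
    + rewrite mulg1, invgM, invgK, mulKVg. reflexivity.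
Qed.

Definition coset (x : G) : G -> Prop := fun y => kernel (iv x ** y).
Definition quot_carrier := {P : G -> Prop | exists x, P = coset x}.
Definition cls (x : G) : quot_carrier := exist _ (coset x) (ex_intro _ x eq_refl).

Lemma cls_eq x y : cls x = cls y <-> kernel (iv x ** y).
Proof.
  split.
  - intro H. change (coset x y). change (proj1_sig (cls x) y).
    rewrite (f_equal (@proj1_sig _ _) H). simpl.
    unfold coset. rewrite mulVg. apply kernel1.
  - intro H. apply subset_eq_compat.
    apply functional_extensionality; intro z; apply propositional_extensionality.
    unfold coset; split; intro Hz.
    + replace (iv y ** z) with (iv (iv x ** y) ** (iv x ** z)).
      * apply kernelM; auto. apply kernelV; auto.
      * rewrite invgM, invgK, <- mulA, mulKVg. reflexivity.
    + replace (iv x ** z) with ((iv x ** y) ** (iv y ** z)).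
      * apply kernelM; auto.
      * rewrite <- mulA, mulKVg. reflexivity.
Qed.

Definition rep (c : quot_carrier) : G :=
  proj1_sig (constructive_indefinite_description _ (proj2_sig c)).

Lemma cls_rep c : cls (rep c) = c.
Proof.
  unfold rep. destruct (constructive_indefinite_description _ (proj2_sig c)) as [x Hx].
  destruct c as [P HP]. apply subset_eq_compat. simpl in *. auto.
Qed.

Lemma cls_surj c : exists x, c = cls x.
Proof. exists (rep c). symmetry. apply cls_rep. Qed.

Definition qmul (c d : quot_carrier) := cls (rep c ** rep d).
Definition qinv (c : quot_carrier) := cls (iv (rep c)).
Definition qone := cls e.

Lemma cls_mul_congr a a' b b' :
  cls a = cls a' -> cls b = cls b' -> cls (a ** b) = cls (a' ** b').
Proof.
  rewrite !cls_eq. intros Ha Hb. rewrite invgM.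
  replace (iv b ** iv a ** (a' ** b')) with (iv b ** (iv a ** a') ** iv (iv b) ** (iv b ** b')).
  - apply kernelM; auto. apply kernelJ; auto.
  - rewrite invgK, !mulA, (mulgK G b). reflexivity.
Qed.

Lemma cls_inv_congr a a' : cls a = cls a' -> cls (iv a) = cls (iv a').
Proof.
  rewrite !cls_eq. intros Ha. rewrite invgK.
  replace (a ** iv a') with (a ** iv (iv a ** a') ** iv a).
  - apply kernelJ, kernelV, Ha.
  - rewrite invgM, invgK, (mulA G a (iv a')), mulgK. reflexivity.
Qed.

Lemma cls_mul x y : qmul (cls x) (cls y) = cls (x ** y).
Proof. apply cls_mul_congr; apply cls_rep. Qed.

Lemma cls_inv x : qinv (cls x) = cls (iv x).
Proof. apply cls_inv_congr, cls_rep. Qed.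

Lemma qmulA x y z : qmul x (qmul y z) = qmul (qmul x y) z.
Proof.
  destruct (cls_surj x) as [a ->], (cls_surj y) as [b ->], (cls_surj z) as [c ->].
  rewrite !cls_mul, mulA. reflexivity.
Qed.

Lemma qmul1 x : qmul qone x = x.
Proof. destruct (cls_surj x) as [a ->]. unfold qone. rewrite cls_mul, mul1g. reflexivity. Qed.

Lemma qmulV x : qmul (qinv x) x = qone.
Proof. destruct (cls_surj x) as [a ->]. rewrite cls_inv, cls_mul, mulVg. reflexivity. Qed.

Definition qopn (O : quot_carrier -> Prop) : Prop := opn G (fun x => O (cls x)).

Lemma qopn_full : qopn (fun _ => True).
Proof. apply opn_full. Qed.

Lemma qopn_inter U V : qopn U -> qopn V -> qopn (fun x => U x /\ V x).
Proof. intros HU HV. apply opn_inter; assumption. Qed.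

Lemma qopn_union (FF : (quot_carrier -> Prop) -> Prop) :
  (forall U, FF U -> qopn U) -> qopn (fun x => exists U, FF U /\ U x).
Proof.
  intro H. apply (opn_local G). intros z [U [HU Hz]].
  exists (fun x => U (cls x)). split; [exact (H U HU)|split; [exact Hz|]].
  intros y Hy. exists U. auto.
Qed.

Definition cls_img (A : G -> Prop) (c : quot_carrier) : Prop := exists u, A u /\ c = cls u.

(* The quotient map is open: the saturation of [A] is the union of the translates
   [A k], [k] in the kernel. *)
Lemma qopn_img A : opn G A -> qopn (cls_img A).
Proof.
  intro HA. apply (opn_local G). intros z [u [Hu Hzu]].
  exists (fun y => A (y ** (iv z ** u))). split; [|split].
  - apply opn_mulr. exact HA.
  - rewrite mulKVg. exact Hu.
  - intros y Hy. exists (y ** (iv z ** u)). split; auto.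
    apply cls_eq. rewrite mulKg. apply cls_eq. exact Hzu.
Qed.

Lemma cls_img_cls A x : A x -> cls_img A (cls x).
Proof. intro H. exists x. auto. Qed.

Lemma qmul_cont W x y : qopn W -> W (qmul x y) ->
  exists U V, qopn U /\ qopn V /\ U x /\ V y /\ (forall a b, U a -> V b -> W (qmul a b)).
Proof.
  intros HW Hxy.
  destruct (cls_surj x) as [a ->], (cls_surj y) as [b ->]. rewrite cls_mul in Hxy.
  destruct (mul_cont G (fun z => W (cls z)) a b HW Hxy) as [U [V [HU [HV [HUa [HVb HUV]]]]]].
  exists (cls_img U), (cls_img V).
  repeat split; try apply qopn_img; try apply cls_img_cls; auto.
  intros c d [u [Hu ->]] [v [Hv ->]]. rewrite cls_mul. auto.
Qed.

Lemma qinv_cont W : qopn W -> qopn (fun x => W (qinv x)).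
Proof.
  intro HW. apply (opn_ext G (fun x => W (cls (iv x)))).
  - intro x. rewrite cls_inv. tauto.
  - exact (inv_cont G (fun x => W (cls x)) HW).
Qed.

Definition quotient : topgroup := {|
  carrier := quot_carrier; mul := qmul; inv := qinv; one := qone; opn := qopn;
  mulA := qmulA; mul1g := qmul1; mulVg := qmulV; opn_full := qopn_full;
  opn_inter := qopn_inter; opn_union := qopn_union; mul_cont := qmul_cont;
  inv_cont := qinv_cont |}.

Definition cls_nbhd (j : J) (x : G) : quotient -> Prop := cls_img (fun z => F j (iv x ** z)).

Lemma qopn_cls_nbhd j x : opn quotient (cls_nbhd j x).
Proof. apply qopn_img, opn_mull, (sys_open _ _ _ sysF). Qed.

Lemma cls_nbhd_cls j x : cls_nbhd j x (cls x).
Proof. apply cls_img_cls. rewrite mulVg. apply (sys_one _ _ _ sysF). Qed.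

Lemma quotient_hausdorff : hausdorff quotient.
Proof.
  intros c d Hcd. destruct (cls_surj c) as [x ->], (cls_surj d) as [y ->].
  assert (Hn : ~ kernel (iv x ** y)) by (intro H; apply Hcd, cls_eq, H).
  apply not_all_ex_not in Hn. destruct Hn as [j Hj].
  destruct (sys_cube _ _ _ sysF j) as [j' [_ [_ [Hs Hc]]]].
  exists (cls_nbhd j' x), (cls_nbhd j' y).
  repeat split; try apply qopn_cls_nbhd; try apply cls_nbhd_cls.
  intros z [[u [Hu ->]] [v [Hv Huv]]]. apply Hj. apply cls_eq in Huv.
  replace (iv x ** y) with ((iv x ** u) ** ((iv u ** v) ** iv (iv y ** v))).
  - apply Hc; [exact Hu|exact (Huv j')|apply Hs; exact Hv].
  - rewrite invgM, invgK, <- !mulA, !mulKVg. reflexivity.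
Qed.

Lemma quotient_pseudochar : pseudochar_le quotient nat.
Proof.
  split; [exists (fun n => n); auto|].
  intro c. destruct (cls_surj c) as [x ->].
  destruct (sys_countable _ _ _ sysF) as [s Hs].
  exists (fun n => cls_nbhd (s n) x). split; [intro n; apply qopn_cls_nbhd|].
  intro d. split; [|intros -> n; apply cls_nbhd_cls].
  intro H. destruct (cls_surj d) as [z ->]. apply cls_eq. intro j.
  destruct (sys_cube _ _ _ sysF j) as [j' [_ [He [Hsy Hc]]]].
  destruct (Hs j') as [n <-]. destruct (H n) as [u [Hu Hzu]]. apply cls_eq in Hzu.
  replace (iv z ** x) with ((iv z ** u) ** (iv (iv x ** u) ** e)).
  - apply Hc; auto.
  - rewrite mulg1, invgM, invgK, <- !mulA, !mulKVg. reflexivity.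
Qed.

Lemma quotient_image : cont_hom_image G quotient.
Proof.
  exists cls. split; [|split].
  - intros V HV. exact HV.
  - intros x y. symmetry. apply cls_mul.
  - intro y. destruct (cls_surj y) as [x ->]. exists x. reflexivity.
Qed.

Lemma cls_img_small (V W : G -> Prop) : cube_root_nbhd G V W -> (forall z, kernel z -> W z) ->
  forall x z, cls_img (fun y => W (iv x ** y)) (cls z) -> V (iv x ** z).
Proof.
  intros [_ [He [Hs Hc]]] HkW x z [u [Hu Hzu]]. apply cls_eq in Hzu.
  replace (iv x ** z) with ((iv x ** u) ** (iv (iv z ** u) ** e)).
  - apply Hc; auto.
  - rewrite mulg1, invgM, invgK, <- !mulA, !mulKVg. reflexivity.
Qed.

End Quotient.

Fixpoint nat_of_list (l : list nat) : nat :=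
  match l with [] => 0 | x :: l' => S (Cantor.to_nat (x, nat_of_list l')) end.

(* [fuel] bounds the recursion; [n] itself is always enough fuel. *)
Fixpoint list_of_nat_fuel (fuel n : nat) : list nat :=
  match fuel, n with
  | S f, S m => fst (Cantor.of_nat m) :: list_of_nat_fuel f (snd (Cantor.of_nat m))
  | _, _ => []
  end.

Definition list_of_nat (n : nat) : list nat := list_of_nat_fuel n n.

Lemma list_of_nat_fuelK l f : nat_of_list l <= f -> list_of_nat_fuel f (nat_of_list l) = l.
Proof.
  revert f; induction l as [|x l IH]; intros f Hf; [destruct f; reflexivity|].
  simpl in Hf. destruct f as [|f]; [lia|]. cbn [list_of_nat_fuel nat_of_list].
  rewrite Cantor.cancel_of_to. cbn [fst snd]. rewrite IH; [reflexivity|].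
  pose proof (Cantor.to_nat_non_decreasing x (nat_of_list l)). lia.
Qed.

Lemma list_of_natK l : list_of_nat (nat_of_list l) = l.
Proof. apply list_of_nat_fuelK. reflexivity. Qed.

Lemma normal_system_union (G : topgroup) J (F : nat -> J -> G -> Prop) :
  (forall n, normal_system G J (F n)) ->
  normal_system G (nat * J) (fun p => F (fst p) (snd p)).
Proof.
  intro sysF. constructor.
  - intros [n j]. apply (sys_open _ _ _ (sysF n)).
  - intros [n j]. apply (sys_one _ _ _ (sysF n)).
  - intros [n j]. destruct (sys_cube _ _ _ (sysF n) j) as [j' H]. exists (n, j'). exact H.
  - intros [n j] x. destruct (sys_conj _ _ _ (sysF n) j x) as [j' H]. exists (n, j'). exact H.
  - destruct (sys_countable _ _ _ (sysF 0)) as [s Hs].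
    exists (fun m => (fst (Cantor.of_nat m), s (snd (Cantor.of_nat m)))).
    intros [n j]. destruct (Hs j) as [k <-]. exists (Cantor.to_nat (n, k)).
    rewrite Cantor.cancel_of_to. reflexivity.
Qed.

Section LindelofGroup.
Variable G : topgroup.
Local Notation "x ** y" := (mul G x y) (at level 40, left associativity).
Local Notation e := (one G).
Local Notation iv := (inv G).
Hypothesis HL : lindelof G.

Definition conj_nbhds (V : G -> Prop) (c : nat -> G -> Prop) : Prop :=
  (forall i, opn G (c i) /\ c i e) /\
  forall x, exists i, forall a, c i a -> V (x ** a ** iv x).

(* Lindelof groups are omega-narrow: countably many translates [x W] cover [G], and
   conjugating by the centres of these translates controls every conjugate of [V]. *)
Lemma conj_nbhds_exists (V : G -> Prop) : opn G V -> V e -> exists c, conj_nbhds V c.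
Proof.
  intros HV He. destruct (cube_root_nbhd_exists G V HV He) as [W [HW [HWe [HWs HWc]]]].
  destruct (HL G (fun s x => W (x ** iv s))) as [sq Hsq].
  - intro s. apply opn_mulr. exact HW.
  - intro x. exists x. rewrite mulgV. exact HWe.
  - exists (fun n a => W (sq n ** a ** iv (sq n))). split.
    + intro i. split.
      * apply (opn_mull G (fun y => W (y ** iv (sq i)))), opn_mulr, HW.
      * rewrite mulg1, mulgV. exact HWe.
    + intro x. destruct (Hsq x) as [n Hn]. exists n. intros a Ha.
      replace (x ** a ** iv x) with
        ((x ** iv (sq n)) ** ((sq n ** a ** iv (sq n)) ** iv (x ** iv (sq n)))).
      * apply HWc; auto.
      * rewrite invgM, invgK, <- !mulA, !mulKg. reflexivity.
Qed.

Definition cube_root (V : G -> Prop) : G -> Prop :=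
  epsilon (inhabits V) (cube_root_nbhd G V).

Lemma cube_root_spec V : opn G V -> V e -> cube_root_nbhd G V (cube_root V).
Proof. intros HV He. unfold cube_root. apply epsilon_spec, cube_root_nbhd_exists; assumption. Qed.

Definition conj_nbhd (V : G -> Prop) : nat -> G -> Prop :=
  epsilon (inhabits (fun _ => V)) (conj_nbhds V).

Lemma conj_nbhd_spec V : opn G V -> V e -> conj_nbhds V (conj_nbhd V).
Proof. intros HV He. unfold conj_nbhd. apply epsilon_spec, conj_nbhds_exists; assumption. Qed.

(* Instructions are read right to left: [0] takes a cube root, [S i] the [i]-th
   neighbourhood controlling conjugates. *)
Fixpoint gen_nbhd (U : G -> Prop) (l : list nat) : G -> Prop :=
  match l with
  | [] => U
  | 0 :: l' => cube_root (gen_nbhd U l')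
  | S i :: l' => conj_nbhd (gen_nbhd U l') i
  end.

Lemma gen_nbhd_open U : opn G U -> U e -> forall l, opn G (gen_nbhd U l) /\ gen_nbhd U l e.
Proof.
  intros HU He l. induction l as [|[|i] l [IH1 IH2]]; simpl; auto.
  - destruct (cube_root_spec _ IH1 IH2) as [A [B _]]. auto.
  - apply (conj_nbhd_spec _ IH1 IH2).
Qed.

Lemma gen_nbhd_system U : opn G U -> U e -> normal_system G (list nat) (gen_nbhd U).
Proof.
  intros HU He. constructor.
  - intro l. apply (gen_nbhd_open U HU He).
  - intro l. apply (gen_nbhd_open U HU He).
  - intro l. exists (0 :: l). destruct (gen_nbhd_open U HU He l) as [H1 H2].
    exact (cube_root_spec _ H1 H2).
  - intros l x. destruct (gen_nbhd_open U HU He l) as [H1 H2].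
    destruct (proj2 (conj_nbhd_spec _ H1 H2) x) as [i Hi]. exists (S i :: l). exact Hi.
  - exists list_of_nat. intro l. exists (nat_of_list l). apply list_of_natK.
Qed.

Section PseudoBase.
Variables (K : Type) (P : K -> G -> Prop).
Hypothesis HP : pseudobase_at G K e P.

Lemma pseudobase_nbhd k : opn G (P k) /\ P k e.
Proof. split; [apply (proj1 HP)|apply (proj2 HP e); reflexivity]. Qed.

Definition gen_system (a : nat -> K) (p : nat * list nat) : G -> Prop :=
  gen_nbhd (P (a (fst p))) (snd p).

Lemma gen_system_normal a : normal_system G _ (gen_system a).
Proof.
  apply (normal_system_union G _ (fun n => gen_nbhd (P (a n)))). intro n.
  destruct (pseudobase_nbhd (a n)). apply gen_nbhd_system; assumption.
Qed.

(* Each kernel of [gen_nbhd (P k)] lies in [P k], so the open sets [~ kernel] cover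
   [G \ {e}]; Lindelof selects countably many of them together with [W]. *)
Lemma gen_system_kernel_sub (k0 : K) (W : G -> Prop) : opn G W -> W e ->
  exists a, forall z, kernel G _ (gen_system a) z -> W z.
Proof.
  intros HW He.
  assert (sysP : forall k, normal_system G _ (gen_nbhd (P k))).
  { intro k. destruct (pseudobase_nbhd k). apply gen_nbhd_system; assumption. }
  destruct (HL (option K) (fun o => match o with
     | None => W
     | Some k => fun z => ~ kernel G _ (gen_nbhd (P k)) z end)) as [s Hs].
  - intros [k|]; [apply opn_not_kernel, sysP | exact HW].
  - intro z. destruct (classic (W z)) as [Hz|Hz]; [exists None; exact Hz|].
    assert (Hne : ~ (forall k, P k z)) by (intro H; apply (proj2 HP) in H; subst; auto).
    apply not_all_ex_not in Hne. destruct Hne as [k Hk].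
    exists (Some k). intro Hker. exact (Hk (Hker [])).
  - exists (fun n => match s n with Some k => k | None => k0 end).
    intros z Hz. destruct (Hs z) as [n Hn]. destruct (s n) as [k|] eqn:E; [|exact Hn].
    exfalso. apply Hn. intro l. specialize (Hz (n, l)). unfold gen_system in Hz. simpl in Hz.
    rewrite E in Hz. exact Hz.
Qed.

End PseudoBase.
End LindelofGroup.

Theorem weight_le_pseudochar_omega (G : topgroup) : lindelof G -> omega_c_moderate G ->
  forall K, pseudochar_le G K -> weight_le G ((nat -> K) * (nat -> bool)).
Proof.
  intros HL HM K [[iota _] Hps]. destruct (Hps (one G)) as [P HP].
  pose (Q a := quotient G _ (gen_system G K P a) (gen_system_normal G HL K P HP a)).
  assert (HQ : forall a, exists B, is_base (Q a) (nat -> bool) B).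
  { intro a. apply HM; [apply quotient_hausdorff|apply quotient_image|apply quotient_pseudochar]. }
  pose (B a := proj1_sig (constructive_indefinite_description _ (HQ a))).
  assert (HB : forall a, is_base (Q a) _ (B a))
    by (intro a; exact (proj2_sig (constructive_indefinite_description _ (HQ a)))).
  exists (fun p z => B (fst p) (snd p) (cls G _ (gen_system G K P (fst p)) z)). split.
  - intros [a t]. exact (proj1 (HB a) t).
  - intros U x HU Hx.
    assert (HV : opn G (fun z => U (mul G x z))) by (apply opn_mull; exact HU).
    assert (HVe : U (mul G x (one G))) by (rewrite mulg1; exact Hx).
    destruct (cube_root_nbhd_exists G _ HV HVe) as [W HW].
    destruct (gen_system_kernel_sub G HL K P HP (iota 0) W (proj1 HW) (proj1 (proj2 HW)))
      as [a Ha].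
    assert (HWx : W (mul G (inv G x) x)) by (rewrite mulVg; exact (proj1 (proj2 HW))).
    pose (sysa := gen_system_normal G HL K P HP a).
    destruct (proj2 (HB a) _ (cls G _ _ x)
      (qopn_img G _ _ sysa _ (opn_mull G W (inv G x) (proj1 HW)))
      (cls_img_cls G _ _ (fun y => W (mul G (inv G x) y)) x HWx))
      as [t [Hxt Ht]].
    exists (a, t). split; [exact Hxt|]. intros z Hz.
    pose proof (cls_img_small G _ _ sysa _ _ HW Ha x z (Ht _ Hz)) as Hxz.
    simpl in Hxz. rewrite mulKVg in Hxz. exact Hxz.
Qed.

Lemma Injective_compose {A B C} (f : A -> B) (g : B -> C) :
  Injective f -> Injective g -> Injective (fun x => g (f x)).
Proof. intros Hf Hg x y E. apply Hf, Hg, E. Qed.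

Definition seq_map {A B} (h : A -> B) (s : nat -> A) : nat -> B := fun n => h (s n).

Lemma seq_map_inj {A B} (h : A -> B) : Injective h -> Injective (seq_map h).
Proof.
  intros Hh s t E. apply functional_extensionality. intro n.
  apply Hh. exact (f_equal (fun u => u n) E).
Qed.

Definition seq_flatten {A} (s : nat -> nat -> A) : nat -> A :=
  fun N => s (fst (Cantor.of_nat N)) (snd (Cantor.of_nat N)).

Lemma seq_flatten_inj {A} : Injective (@seq_flatten A).
Proof.
  intros s t E. apply functional_extensionality. intro i. apply functional_extensionality. intro n.
  pose proof (f_equal (fun u => u (Cantor.to_nat (i, n))) E) as H.
  unfold seq_flatten in H. rewrite Cantor.cancel_of_to in H. exact H.
Qed.

Section SeqEncoding.
Variables (K : Type) (iota : nat -> K).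
Hypothesis iota_inj : Injective iota.

Definition option_seq (o : option (nat -> K)) : nat -> K :=
  match o with
  | None => fun _ => iota 0
  | Some u => fun n => match n with 0 => iota 1 | S n => u n end
  end.

Lemma option_seq_inj : Injective option_seq.
Proof.
  intros [u|] [v|] E; try reflexivity.
  - f_equal. apply functional_extensionality. intro n. exact (f_equal (fun w => w (S n)) E).
  - discriminate (iota_inj _ _ (f_equal (fun w => w 0) E)).
  - discriminate (iota_inj _ _ (f_equal (fun w => w 0) E)).
Qed.

Definition pair_seq (p : (nat -> K) * (nat -> K)) : nat -> K :=
  seq_flatten (fun i => match i with 0 => fst p | _ => snd p end).

Lemma pair_seq_inj : Injective pair_seq.
Proof.
  intros [u u'] [v v'] E. unfold pair_seq in E. apply seq_flatten_inj in E.
  f_equal; [exact (f_equal (fun w => w 0) E)|exact (f_equal (fun w => w 1) E)].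
Qed.

Lemma bool_nat_inj : Injective (fun b : bool => iota (if b then 1 else 0)).
Proof. intros [|] [|] E; try reflexivity; discriminate (iota_inj _ _ E). Qed.

Definition base_index_seq (p : (nat -> K) * (nat -> bool)) : nat -> K :=
  pair_seq (fst p, seq_map (fun b : bool => iota (if b then 1 else 0)) (snd p)).

Lemma base_index_seq_inj : Injective base_index_seq.
Proof.
  intros [u t] [v t'] E. apply pair_seq_inj in E. injection E as -> E.
  apply (seq_map_inj _ bool_nat_inj) in E. subst. reflexivity.
Qed.

Definition code_seq (c : nat -> nat -> option ((nat -> K) * (nat -> bool))) : nat -> K :=
  seq_flatten (seq_map (fun s => seq_flatten (seq_map (fun o =>
    option_seq (option_map base_index_seq o)) s)) c).

Lemma option_map_inj {A B} (h : A -> B) : Injective h -> Injective (option_map h).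
Proof.
  intros Hh [x|] [y|] E; simpl in E; try discriminate; [|reflexivity].
  injection E as E. f_equal. auto.
Qed.

Lemma code_seq_inj : Injective code_seq.
Proof.
  apply (Injective_compose (seq_map _) seq_flatten); [|apply seq_flatten_inj].
  apply seq_map_inj, (Injective_compose (seq_map _) seq_flatten); [|apply seq_flatten_inj].
  apply seq_map_inj, (Injective_compose (option_map _) option_seq); [|apply option_seq_inj].
  apply option_map_inj, base_index_seq_inj.
Qed.

End SeqEncoding.

Open Scope R_scope.

Definition dyad (n : nat) : R := (/2) ^ n.

Lemma dyad_pos n : 0 < dyad n.
Proof. apply pow_lt. lra. Qed.

Lemma dyad_S n : dyad (S n) = dyad n / 2.
Proof. unfold dyad. simpl. lra. Qed.

Lemma dyad_le n m : (n <= m)%nat -> dyad m <= dyad n.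
Proof. intro H. induction H; [lra|]. rewrite dyad_S. pose proof (dyad_pos m). lra. Qed.

Lemma dyad_lt_inv n m : dyad n < dyad m -> (m < n)%nat.
Proof. intro H. destruct (Nat.lt_ge_cases m n) as [|Hnm]; auto. apply dyad_le in Hnm. lra. Qed.

Lemma dyad_small d : 0 < d -> exists n, dyad n < d.
Proof.
  intro Hd. destruct (pow_lt_1_zero (/2) ltac:(rewrite Rabs_pos_eq; lra) d Hd) as [n Hn].
  exists n. specialize (Hn n (le_n n)). rewrite Rabs_pos_eq in Hn; [exact Hn|].
  apply pow_le. lra.
Qed.

Section Kakutani.
Variable G : topgroup.
Local Notation "x ** y" := (mul G x y) (at level 40, left associativity).
Local Notation e := (one G).
Local Notation iv := (inv G).
Variable W : nat -> G -> Prop.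
Hypothesis W0_open : opn G (W 0).
Hypothesis W0_one : W 0 e.
Hypothesis W_cube : forall n, cube_root_nbhd G (W n) (W (S n)).

Lemma W_open n : opn G (W n).
Proof. destruct n; [exact W0_open|apply W_cube]. Qed.

Lemma W_one n : W n e.
Proof. destruct n; [exact W0_one|apply W_cube]. Qed.

Lemma W_sym n a : W (S n) a -> W (S n) (iv a).
Proof. apply W_cube. Qed.

Lemma W_mono n m a : (n <= m)%nat -> W m a -> W n a.
Proof.
  intro H. induction H as [|m H IH]; auto. intro Ha. apply IH.
  rewrite <- (mulg1 G a), <- (mul1g G e). apply W_cube; auto using W_one.
Qed.

Definition word_val (l : list (nat * G)) : G := fold_right (fun p acc => snd p ** acc) e l.
Definition word_len (l : list (nat * G)) : R := fold_right (fun p acc => dyad (fst p) + acc) 0 l.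
Definition word_valid (l : list (nat * G)) : Prop := Forall (fun p => W (fst p) (snd p)) l.

Lemma word_len_ge0 l : 0 <= word_len l.
Proof. induction l as [|p l IH]; simpl; [lra|]. pose proof (dyad_pos (fst p)). lra. Qed.

Lemma word_len_app l1 l2 : word_len (l1 ++ l2) = word_len l1 + word_len l2.
Proof. induction l1 as [|p l IH]; simpl; [lra|]. rewrite IH. lra. Qed.

Lemma word_val_app l1 l2 : word_val (l1 ++ l2) = word_val l1 ** word_val l2.
Proof.
  induction l1 as [|p l IH]; simpl; [rewrite mul1g; reflexivity|].
  unfold word_val in *. simpl. rewrite IH, mulA. reflexivity.
Qed.

Lemma word_split l h : l <> [] -> 0 < h -> exists l1 n w l2,
  l = l1 ++ (n, w) :: l2 /\ word_len l1 < h /\ (l2 = [] \/ h <= word_len l1 + dyad n).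
Proof.
  revert h. induction l as [|[n w] l IH]; intros h Hl Hh; [congruence|].
  destruct l as [|p l'].
  - exists [], n, w, []. simpl. auto.
  - destruct (Rle_lt_dec h (dyad n)) as [H1|H1].
    + exists [], n, w, (p :: l'). simpl. split; [reflexivity|]. split; [exact Hh|]. right; lra.
    + destruct (IH (h - dyad n) ltac:(congruence) ltac:(lra))
        as [l1 [m [v [l2 [E1 [E2 E3]]]]]].
      exists ((n, w) :: l1), m, v, l2. simpl. rewrite E1. split; [reflexivity|].
      split; [lra|]. destruct E3; [left; assumption|right; lra].
Qed.

(* Birkhoff-Kakutani: cut the word where its partial length crosses [dyad (S m)]; the
   two sides and the middle letter then each lie in [W (S m)]. *)
Lemma word_val_small_len N : forall l m, (length l <= N)%nat ->
  word_valid l -> word_len l < dyad m -> W m (word_val l).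
Proof.
  induction N as [|N IH]; intros l m Hlen Hv Hs; (destruct l as [|p0 l0]; [apply W_one|]);
    [simpl in Hlen; lia|].
  destruct (word_split (p0 :: l0) (dyad (S m)) ltac:(congruence) (dyad_pos _))
    as [l1 [n [w [l2 [E1 [E2 E3]]]]]].
  rewrite E1 in Hlen, Hv, Hs |- *. rewrite word_len_app in Hs. simpl in Hs.
  rewrite word_val_app. simpl.
  apply Forall_app in Hv. destruct Hv as [Hv1 Hv2]. inversion Hv2; subst. simpl in *.
  rewrite length_app in Hlen. simpl in Hlen.
  pose proof (word_len_ge0 l1). pose proof (word_len_ge0 l2).
  assert (Hm : dyad (S m) * 2 = dyad m) by (rewrite dyad_S; lra).
  apply W_cube.
  - apply IH; auto; lia.
  - apply (W_mono (S m) n); auto. apply dyad_lt_inv. lra.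
  - apply IH; auto; [lia|]. destruct E3 as [->|E3]; simpl; [apply dyad_pos|lra].
Qed.

(* The alternative [s = 1] keeps the set inhabited and truncates the norm at [1]. *)
Definition norm_bound (z : G) (s : R) : Prop :=
  s = 1 \/ exists l, word_valid l /\ word_val l = z /\ word_len l = s.

Lemma norm_bound_ge0 z s : norm_bound z s -> 0 <= s.
Proof. intros [->|[l [_ [_ <-]]]]; [lra|apply word_len_ge0]. Qed.

Lemma norm_bound_opp_bounded z : bound (fun t => norm_bound z (- t)).
Proof. exists 0. intros t Ht. pose proof (norm_bound_ge0 z _ Ht). lra. Qed.

Lemma norm_bound_opp_inhabited z : exists t, norm_bound z (- t).
Proof. exists (-1). left. lra. Qed.

(* The infimum of the bounds, obtained as minus the supremum of their opposites. *)
Definition knorm (z : G) : R :=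
  - proj1_sig (completeness _ (norm_bound_opp_bounded z) (norm_bound_opp_inhabited z)).

Lemma knorm_le z s : norm_bound z s -> knorm z <= s.
Proof.
  intro H. unfold knorm. destruct (completeness _ _ _) as [m [Hm1 Hm2]]. simpl.
  assert (- s <= m) by (apply Hm1; rewrite Ropp_involutive; exact H). lra.
Qed.

Lemma knorm_ge z c : (forall s, norm_bound z s -> c <= s) -> c <= knorm z.
Proof.
  intro H. unfold knorm. destruct (completeness _ _ _) as [m [Hm1 Hm2]]. simpl.
  assert (m <= - c) by (apply Hm2; intros t Ht; apply H in Ht; lra). lra.
Qed.

Lemma knorm1 : knorm e = 0.
Proof.
  apply Rle_antisym; [|apply knorm_ge, norm_bound_ge0].
  apply knorm_le. right. exists []. repeat split. constructor.
Qed.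

Lemma knorm_W n w : W n w -> knorm w <= dyad n.
Proof.
  intro H. apply knorm_le. right. exists [(n, w)].
  split; [constructor; auto|]. simpl. split; [apply mulg1|lra].
Qed.

Lemma knormM a b : knorm (a ** b) <= knorm a + knorm b.
Proof.
  assert (Hst : forall s t, norm_bound a s -> norm_bound b t -> knorm (a ** b) <= s + t).
  { intros s t Hs Ht. pose proof (norm_bound_ge0 _ _ Hs). pose proof (norm_bound_ge0 _ _ Ht).
    assert (knorm (a ** b) <= 1) by (apply knorm_le; left; reflexivity).
    destruct Hs as [->|[l1 [Hv1 [Hp1 Hs1]]]]; [lra|].
    destruct Ht as [->|[l2 [Hv2 [Hp2 Hs2]]]]; [lra|].
    apply knorm_le. right. exists (l1 ++ l2). split; [apply Forall_app; auto|].
    rewrite word_val_app, word_len_app. subst. auto. }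
  assert (H : knorm (a ** b) - knorm a <= knorm b).
  { apply knorm_ge. intros t Ht.
    assert (knorm (a ** b) - t <= knorm a); [|lra].
    apply knorm_ge. intros s Hs. pose proof (Hst s t Hs Ht). lra. }
  lra.
Qed.

Lemma knorm_lt1 z : knorm z < 1 -> W 0 z.
Proof.
  intro H. destruct (classic (exists s, norm_bound z s /\ s < 1)) as [[s [Hs Hs1]]|Hn].
  - destruct Hs as [->|[l [Hv [<- Hl]]]]; [lra|].
    apply (word_val_small_len (length l)); auto. unfold dyad. simpl. lra.
  - exfalso. assert (1 <= knorm z); [|lra].
    apply knorm_ge. intros s Hs. destruct (Rlt_le_dec s 1); auto. exfalso. eauto.
Qed.

Lemma knorm_mul_near z d : 0 < d ->
  exists n, forall w, W n w -> Rabs (knorm (z ** w) - knorm z) < d.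
Proof.
  intro Hd. destruct (dyad_small d Hd) as [N HN]. exists (S N). intros w Hw.
  pose proof (dyad_le N (S N) (le_S _ _ (le_n N))).
  pose proof (knorm_W _ _ Hw). pose proof (knorm_W _ _ (W_sym _ _ Hw)).
  pose proof (knormM z w). pose proof (knormM (z ** w) (iv w)).
  rewrite mulgK in H3. apply Rabs_def1; lra.
Qed.

Lemma open_set_pos : open_set (fun r => 0 < r).
Proof.
  intros r Hr. exists (mkposreal r Hr). intros y Hy. unfold disc in Hy. simpl in Hy.
  apply Rabs_def2 in Hy. lra.
Qed.

Lemma cont_real_knorm x : cont_real G (fun z => 1 - knorm (iv x ** z)).
Proof.
  intros V HV. apply opn_local. intros z Hz. destruct (HV _ Hz) as [d Hd].
  destruct (knorm_mul_near (iv x ** z) d (cond_pos d)) as [n Hn].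
  exists (fun y => W n (iv z ** y)). split; [apply opn_mull, W_open|split].
  - rewrite mulVg. apply W_one.
  - intros y Hy. apply Hd. unfold disc. specialize (Hn _ Hy).
    rewrite mulA, <- (mulA G (iv x) z), mulgV, mulg1 in Hn.
    replace (1 - knorm (iv x ** y) - (1 - knorm (iv x ** z)))
      with (- (knorm (iv x ** y) - knorm (iv x ** z))) by ring.
    rewrite Rabs_Ropp. exact Hn.
Qed.

End Kakutani.

Fixpoint cube_root_seq (G : topgroup) (W0 : G -> Prop) (n : nat) : G -> Prop :=
  match n with 0 => W0 | S n' => cube_root G (cube_root_seq G W0 n') end.

Lemma cube_root_seq_spec G W0 : opn G W0 -> W0 (one G) ->
  forall n, cube_root_nbhd G (cube_root_seq G W0 n) (cube_root_seq G W0 (S n)).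
Proof.
  intros H0 H1 n. induction n as [|n IH]; apply cube_root_spec; auto; apply IH.
Qed.

Theorem cozero_base (G : topgroup) :
  exists B : {f : G -> R | cont_real G f} -> G -> Prop, is_base G _ B.
Proof.
  exists (fun f z => 0 < proj1_sig f z). split.
  - intros [f Hf]. exact (Hf _ open_set_pos).
  - intros U x HU Hx.
    pose (V := fun z => U (mul G x z)).
    assert (HV : opn G V) by (apply opn_mull; exact HU).
    assert (HVe : V (one G)) by (unfold V; rewrite mulg1; exact Hx).
    pose (W := cube_root_seq G V).
    pose proof (cube_root_seq_spec G V HV HVe) as HW.
    exists (exist _ _ (cont_real_knorm G W HV HVe HW x)). simpl. split.
    + rewrite mulVg, (knorm1 G W). lra.
    + intros y Hy. assert (Hy1 : knorm G W (mul G (inv G x) y) < 1) by lra.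
      apply (knorm_lt1 G W HVe HW) in Hy1. unfold W, V in Hy1. simpl in Hy1.
      rewrite mulKVg in Hy1. exact Hy1.
Qed.

Lemma Rabs_triang_sub a b c : Rabs (a - c) <= Rabs (a - b) + Rabs (b - c).
Proof. replace (a - c) with ((a - b) + (b - c)) by ring. apply Rabs_triang. Qed.

Lemma open_set_far q r : open_set (fun t => r < Rabs (t - q)).
Proof.
  intros t Ht. assert (Hd : 0 < Rabs (t - q) - r) by lra.
  exists (mkposreal _ Hd). intros y Hy. unfold disc in Hy. simpl in Hy.
  pose proof (Rabs_triang_sub t y q). rewrite Rabs_minus_sym in Hy. lra.
Qed.

Lemma open_set_near q r : open_set (fun t => Rabs (t - q) < r).
Proof.
  intros t Ht. assert (Hd : 0 < r - Rabs (t - q)) by lra.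
  exists (mkposreal _ Hd). intros y Hy. unfold disc in Hy. simpl in Hy.
  pose proof (Rabs_triang_sub y t q). lra.
Qed.

(* The closed dyadic intervals [[k dyad m - dyad m, k dyad m + dyad m]], k in Z,
   enumerated by [nat] through Cantor pairing. *)
Definition dyadic_center (N : nat) : R :=
  let (a, m) := Cantor.of_nat N in let (k1, k2) := Cantor.of_nat a in
  (INR k1 - INR k2) * dyad m.

Definition dyadic_radius (N : nat) : R := dyad (snd (Cantor.of_nat N)).

Lemma dyadic_interval_mem (x : R) (m : nat) : exists N,
  dyadic_radius N = dyad m /\ Rabs (x - dyadic_center N) <= dyadic_radius N.
Proof.
  pose proof (dyad_pos m). destruct (archimed (x / dyad m)) as [A1 A2].
  set (k := up (x / dyad m)) in *.
  exists (Cantor.to_nat (Cantor.to_nat (Z.to_nat k, Z.to_nat (- k)), m)).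
  unfold dyadic_center, dyadic_radius. rewrite !Cantor.cancel_of_to. simpl. split; [reflexivity|].
  replace (INR (Z.to_nat k) - INR (Z.to_nat (- k))) with (IZR k)
    by (rewrite !INR_IZR_INZ, <- minus_IZR; f_equal; lia).
  replace (x - IZR k * dyad m) with (- ((IZR k - x / dyad m) * dyad m)) by (field; lra).
  rewrite Rabs_Ropp, Rabs_mult, (Rabs_pos_eq (dyad m)), Rabs_pos_eq by lra. nra.
Qed.

Section Coding.
Variable G : topgroup.
Variables (J : Type) (B : J -> G -> Prop).
Hypothesis HB : is_base G J B.
Hypothesis HL : lindelof G.

Definition ball_code (f : G -> R) (q r : R) (c : nat -> option J) : Prop :=
  (forall n j, c n = Some j -> forall y, B j y -> Rabs (f y - q) < 2 * r) /\
  (forall z, Rabs (f z - q) <= r -> exists n j, c n = Some j /\ B j z).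

Lemma ball_code_exists f q r : 0 < r -> cont_real G f -> exists c, ball_code f q r c.
Proof.
  intros Hr Hf.
  pose (good j := forall y, B j y -> Rabs (f y - q) < 2 * r).
  destruct (HL (option J) (fun o => match o with
     | None => fun z => r < Rabs (f z - q)
     | Some j => fun z => B j z /\ good j end)) as [s Hs].
  - intros [j|]; [|exact (Hf _ (open_set_far q r))].
    apply opn_local. intros z [Hz Hj]. exists (B j). split; [apply (proj1 HB)|auto].
  - intro z. destruct (Rlt_le_dec r (Rabs (f z - q))) as [H|H]; [exists None; exact H|].
    destruct (proj2 HB _ z (Hf _ (open_set_near q (2 * r))) ltac:(lra)) as [j [Hj1 Hj2]].
    exists (Some j). split; [exact Hj1|exact Hj2].
  - exists (fun n => match s n with
       | Some j => if excluded_middle_informative (good j) then Some j else None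
       | None => None end).
    split.
    + intros n j. destruct (s n) as [j'|]; [|discriminate].
      destruct (excluded_middle_informative _) as [Hi|Hi]; [|discriminate].
      intro E. injection E as <-. exact Hi.
    + intros z Hz. destruct (Hs z) as [n Hn]. exists n.
      destruct (s n) as [j|]; [|simpl in Hn; lra].
      destruct Hn as [Hn1 Hn2]. exists j.
      destruct (excluded_middle_informative _); [auto|contradiction].
Qed.

Definition fun_code (f : G -> R) (N : nat) : nat -> option J :=
  epsilon (inhabits (fun _ => None)) (ball_code f (dyadic_center N) (dyadic_radius N)).

Lemma fun_code_spec f N : cont_real G f ->
  ball_code f (dyadic_center N) (dyadic_radius N) (fun_code f N).
Proof.
  intro Hf. unfold fun_code. apply epsilon_spec, ball_code_exists; [|exact Hf].
  apply dyad_pos.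
Qed.

(* If [f z <> g z], a dyadic interval of radius [< |f z - g z| / 3] around [f z] has a
   code entry through [z] on which [g] is also within twice the radius. *)
Lemma fun_code_inj f g : cont_real G f -> cont_real G g -> fun_code f = fun_code g -> f = g.
Proof.
  intros Hf Hg E. apply functional_extensionality. intro z.
  destruct (Req_dec (f z) (g z)) as [H|H]; [exact H|exfalso].
  assert (Hd : 0 < Rabs (f z - g z) / 3).
  { assert (0 < Rabs (f z - g z)) by (apply Rabs_pos_lt; lra). lra. }
  destruct (dyad_small _ Hd) as [m Hm].
  destruct (dyadic_interval_mem (f z) m) as [N [Hr Hfz]].
  destruct (proj2 (fun_code_spec f N Hf) z Hfz) as [n [j [Hn Hj]]].
  rewrite E in Hn. pose proof (proj1 (fun_code_spec g N Hg) n j Hn z Hj) as Hgz.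
  pose proof (Rabs_triang_sub (f z) (dyadic_center N) (g z)).
  rewrite (Rabs_minus_sym (dyadic_center N) (g z)) in H0. lra.
Qed.

End Coding.

Lemma lindelof_image (G H : topgroup) : cont_hom_image G H -> lindelof G -> lindelof H.
Proof.
  intros [f [Hc [_ Hs]]] HL I U HU Hcov.
  destruct (HL I (fun i x => U i (f x))) as [s Hsub]; [intro i; apply Hc, HU|intro x; apply Hcov|].
  exists s. intro y. destruct (Hs y) as [x <-]. apply Hsub.
Qed.

Lemma cont_hom_image_trans (G H H' : topgroup) :
  cont_hom_image G H -> cont_hom_image H H' -> cont_hom_image G H'.
Proof.
  intros [f [Hc [Hh Hs]]] [g [Hc' [Hh' Hs']]]. exists (fun x => g (f x)). split; [|split].
  - intros V HV. apply (Hc (fun y => V (g y))), Hc', HV.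
  - intros x y. rewrite Hh, Hh'. reflexivity.
  - intro z. destruct (Hs' z) as [y <-]. destruct (Hs y) as [x <-]. exists x. reflexivity.
Qed.

Lemma moderate_image Kp Lm (G H : topgroup) :
  cont_hom_image G H -> moderate Kp Lm G -> moderate Kp Lm H.
Proof.
  intros Himg HM H' HH' Himg'. apply HM; [exact HH'|].
  exact (cont_hom_image_trans G H H' Himg Himg').
Qed.

Lemma weight_le_injective (G : topgroup) I L (i : I -> L) :
  Injective i -> weight_le G I -> weight_le G L.
Proof.
  intros Hi [B [HBo HBb]].
  exists (fun t y => exists j, i j = t /\ B j y). split.
  - intro t. apply opn_local. intros y [j [Ht Hy]].
    exists (B j). split; [apply HBo|split; [exact Hy|]]. intros y' Hy'. exists j. auto.
  - intros U y HU Hy. destruct (HBb U y HU Hy) as [j [Hjy HjU]].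
    exists (i j). split; [exists j; auto|].
    intros y' [j' [E Hy']]. apply Hi in E. subst. auto.
Qed.

Theorem cont_real_embedding (G : topgroup) : lindelof G -> omega_c_moderate G ->
  forall K, pseudochar_le G K -> exists i : (G -> R) -> (nat -> K),
    forall f g, cont_real G f -> cont_real G g -> i f = i g -> f = g.
Proof.
  intros HL HM K HK. destruct (weight_le_pseudochar_omega G HL HM K HK) as [B HB].
  destruct HK as [[iota Hiota] _].
  exists (fun f => code_seq K iota (fun_code G _ B f)).
  intros f g Hf Hg E. apply (code_seq_inj K iota Hiota) in E.
  exact (fun_code_inj G _ B HB HL f g Hf Hg E).
Qed.

Theorem theorem3 (G : topgroup) :
  lindelof G -> hausdorff G -> omega_c_moderate G ->
  (exists B : {f : G -> R | cont_real G f} -> G -> Prop,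
      is_base G {f : G -> R | cont_real G f} B) /\
  (forall K : Type, pseudochar_le G K ->
      exists i : (G -> R) -> (nat -> K),
        forall f g, cont_real G f -> cont_real G g -> i f = i g -> f = g) /\
  (forall T : Type, infinite_type T -> moderate T (nat -> T) G).
Proof.
  intros HL _ HM. split; [apply cozero_base|split; [apply cont_real_embedding; assumption|]].
  intros T _ H HH Himg Hps.
  destruct (cont_real_embedding H (lindelof_image G H Himg HL)
    (moderate_image _ _ G H Himg HM) T Hps) as [i Hi].
  apply (weight_le_injective H _ _ (fun f : {f : H -> R | cont_real H f} => i (proj1_sig f))).
  - intros [f hf] [g hg] E. apply subset_eq_compat, Hi; assumption.
  - apply cozero_base.
Qed.
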